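(* Let the branching factor satisfy $b>1$, let $\ell^*$ be the peak of the single-peaked sequence $\{\lambda_i\}$ and $\gamma>1$ a constant with $\sum_{j\ge i}\lambda_j\le\gamma\lambda_i$ for all $i\ge\ell^*+2$. Then for all $i\le\ell^*$, $\lambda_{i+1}\,x_i\le(\gamma+1)(h-i)$.
   Context: Galton–Watson branching process on an infinite $d$-ary tree (root at level $0$) with offspring distribution $D=\{c_j\}_{j=0}^d$, branching factor $b=\sum_j jc_j$; each non-root node independently holds an answer with probability $1/n$. Let $t(x)=\sum_jc_jx^j(1-\frac1n)^j$, $\phi_0=1$, $\phi_i=t(\phi_{i-1})$, $\lambda_i=\phi_{i-1}-\phi_i$. For $b>1$ the sequence $\{\lambda_i\}$ is single-peaked: there is a level $\ell^*$ with $\lambda_{i-1}\le\lambda_i$ for $i\le\ell^*$ and $\lambda_j>\lambda_{j+1}$ for $j\ge\ell^*$, and there is a constant $\gamma>1$ (independent of $n$) with $\sum_{j\ge i}\lambda_j\le\gamma\lambda_i$ for all $i\ge\ell^*+2$. For a level $h$, define $x_h=0$ and for $i\le h-1$, $x_i=\max_{i+1\le j\le h}\{x_j+\frac{j-i}{\lambda_{i+1}}\sum_{\ell=i+1}^h\lambda_\ell\}$ (the direct referral rewards of the DR mechanism). *)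

From HB Require Import structures.
From mathcomp Require Import all_boot all_order all_algebra.
From mathcomp Require Import all_classical all_reals all_analysis.
Set Implicit Arguments. Unset Strict Implicit. Unset Printing Implicit Defensive.
Import Order.TTheory GRing.Theory Num.Theory.
Local Open Scope ring_scope.

Section GW.
Variable R : realType.

Definition tGW (d : nat) (c : nat -> R) (n : R) (x : R) : R :=
  \sum_(0 <= j < d.+1) c j * x ^+ j * (1 - n^-1) ^+ j.

Definition branching (d : nat) (c : nat -> R) : R :=
  \sum_(0 <= j < d.+1) j%:R * c j.

Definition phiGW d c n (i : nat) : R := iter i (tGW d c n) 1.

(* lambda_i = phi_{i-1} - phi_i  (meaningful for i >= 1; lambda_0 = 0) *)
Definition lambdaGW d c n (i : nat) : R := phiGW d c n i.-1 - phiGW d c n i.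

(* Direct referral rewards: x_h = 0, and for i <= h-1,
   x_i = max_{i+1 <= j <= h} { x_j + (j-i)/lambda_{i+1} * sum_{l=i+1}^h lambda_l }.
   Computed with fuel m (fuel h suffices for all i <= h). *)
Fixpoint xDR_aux (lam : nat -> R) (h : nat) (m : nat) (i : nat) : R :=
  match m with
  | 0 => 0
  | m'.+1 =>
    if (i < h)%N then
      let S := \sum_(i.+1 <= l < h.+1) lam l in
      let T := fun j : nat => xDR_aux lam h m' j + (j%:R - i%:R) / lam i.+1 * S in
      \big[Num.max/T h]_(i.+1 <= j < h) T j
    else 0
  end.

Definition xDR (lam : nat -> R) (h i : nat) : R := xDR_aux lam h h i.

End GW.

From HB Require Import structures.
From mathcomp Require Import all_boot all_order all_algebra.
From mathcomp Require Import all_classical all_reals all_analysis.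
From mathcomp Require Import ring lra.
Set Implicit Arguments. Unset Strict Implicit. Unset Printing Implicit Defensive.
Import Order.TTheory GRing.Theory Num.Theory.
Local Open Scope ring_scope.

(* Each step of the recursion for x_i adds (j - i) S_i / lambda_{i+1} with
   S_i = sum_{i < l <= h} lambda_l, so if lambda_{i+1} S_j / lambda_{j+1} <= gamma + 1
   for every j >= i, induction along the recursion gives
   lambda_{i+1} x_i <= (gamma + 1)(h - i).  Before the peak the ratio
   lambda_{i+1} / lambda_{j+1} is at most 1 and S_j <= 1 (the lambda's
   telescope to a difference of probabilities); after the peak
   S_j <= lambda_{j+1} + gamma lambda_{j+2} <= (gamma + 1) lambda_{j+1}. *)

Lemma scaled_xDR_aux_le (R : realType) (lam : nat -> R) (h i : nat) (a K : R) :
  0 <= a -> 0 <= K ->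
  (forall j, (i <= j)%N -> (j < h)%N ->
     a * (lam j.+1)^-1 * \sum_(j.+1 <= l < h.+1) lam l <= K) ->
  forall m j, (i <= j)%N -> (j <= h)%N ->
    a * xDR_aux lam h m j <= K * (h%:R - j%:R).
Proof.
move=> a_ge0 K_ge0 step; elim=> [|m IHm] j ij jh /=.
  by rewrite mulr0 mulr_ge0 // subr_ge0 ler_nat.
case: ifP => jlt; last by rewrite mulr0 mulr_ge0 // subr_ge0 ler_nat.
set S := \sum_(j.+1 <= l < h.+1) lam l.
have term_le k : (j < k)%N -> (k <= h)%N ->
    a * (xDR_aux lam h m k + (k%:R - j%:R) / lam j.+1 * S) <= K * (h%:R - j%:R).
  move=> jk kh.
  have IHk := IHm k (leq_trans ij (ltnW jk)) kh.
  have kj_ge0 : 0 <= k%:R - j%:R :> R by rewrite subr_ge0 ler_nat ltnW.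
  have : (k%:R - j%:R) * (a * (lam j.+1)^-1 * S) <= (k%:R - j%:R) * K.
    exact/ler_wpM2l/step.
  have -> : a * (xDR_aux lam h m k + (k%:R - j%:R) / lam j.+1 * S) =
    a * xDR_aux lam h m k + (k%:R - j%:R) * (a * (lam j.+1)^-1 * S) by ring.
  lra.
rewrite big_nat_cond.
apply: (big_ind (fun x => a * x <= K * (h%:R - j%:R))); first exact: term_le.
  by move=> x y; rewrite maxEle; case: ifP.
by move=> k /andP[/andP[jk kh] _]; apply: term_le => //; exact: ltnW.
Qed.

Section SinglePeaked.
Variables (R : realType) (lam : nat -> R) (lstar : nat) (gamma : R).
Hypotheses (lam_ge0 : forall k, 0 <= lam k) (lam_le1 : forall k, lam k <= 1).
Hypothesis sum_lam_le1 :
  forall m k, (m <= k)%N -> \sum_(m.+1 <= l < k.+1) lam l <= 1.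
Hypothesis lam_incr : forall i, (2 <= i <= lstar)%N -> lam i.-1 <= lam i.
Hypothesis lam_decr : forall j, (lstar <= j)%N -> lam j.+1 < lam j.
Hypothesis gamma_gt1 : 1 < gamma.
Hypothesis tail_le : forall i, (lstar + 2 <= i)%N ->
  (\sum_(i <= j <oo) (lam j)%:E <= (gamma * lam i)%:E)%E.

Let gamma_ge0 : 0 <= gamma. Proof. exact: le_trans ler01 (ltW gamma_gt1). Qed.

Lemma lam_le_upto_peak a b : (1 <= a)%N -> (a <= b)%N -> (b <= lstar)%N ->
  lam a <= lam b.
Proof.
move=> a_ge1; elim: b => [|b IHb] ab bl; first by move: a_ge1 ab; case: a.
move: ab; rewrite leq_eqVlt => /orP[/eqP->//|]; rewrite ltnS => ab.
apply: le_trans (IHb ab (ltnW bl)) _.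
by apply: (@lam_incr b.+1); rewrite ltnS bl andbT (leq_trans a_ge1 ab).
Qed.

Lemma partial_tail_le j k : (lstar + 2 <= j)%N ->
  \sum_(j <= l < k) lam l <= gamma * lam j.
Proof.
move=> j_ge; rewrite -lee_fin -sumEFin; apply: le_trans (tail_le j_ge).
by apply: nneseries_lim_ge => l _ _; rewrite lee_fin.
Qed.

Lemma ratio_le_before_peak i j h : (i <= j)%N -> (j < lstar)%N -> (j <= h)%N ->
  lam i.+1 * (lam j.+1)^-1 * \sum_(j.+1 <= l < h.+1) lam l <= 1.
Proof.
move=> ij jl jh.
have S_ge0 : 0 <= \sum_(j.+1 <= l < h.+1) lam l by apply: sumr_ge0.
have [->|lj_neq0] := eqVneq (lam j.+1) 0; first by rewrite invr0 mulr0 mul0r ler01.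
have lj_gt0 : 0 < lam j.+1 by rewrite lt0r lj_neq0 lam_ge0.
have ratio_le1 : lam i.+1 * (lam j.+1)^-1 <= 1.
  by rewrite ler_pdivrMr // mul1r lam_le_upto_peak.
rewrite -[1](mulr1 1); apply: ler_pM => //; last exact: sum_lam_le1.
by rewrite mulr_ge0 // invr_ge0.
Qed.

Lemma ratio_le_after_peak i j h : (lstar <= j)%N -> (j < h)%N ->
  lam i.+1 * (lam j.+1)^-1 * \sum_(j.+1 <= l < h.+1) lam l <= gamma + 1.
Proof.
move=> jl jh.
have ljj : lam j.+2 < lam j.+1 by apply: lam_decr; exact: leqW.
have lj_gt0 : 0 < lam j.+1 by exact: le_lt_trans ljj.
have S_le : \sum_(j.+1 <= l < h.+1) lam l <= (gamma + 1) * lam j.+1.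
  rewrite big_ltn ?ltnS //.
  have : \sum_(j.+2 <= l < h.+1) lam l <= gamma * lam j.+2.
    by apply: partial_tail_le; rewrite addn2 !ltnS.
  have : gamma * lam j.+2 <= gamma * lam j.+1 by exact/ler_wpM2l/ltW.
  lra.
rewrite -mulrA -[leRHS]mulr1 mulrC; apply: ler_pM => //.
- by rewrite mulr_ge0 ?invr_ge0 ?(ltW lj_gt0) ?sumr_ge0.
- by rewrite mulrC ler_pdivrMr.
Qed.

Lemma scaled_xDR_le i h : (i <= lstar)%N -> (i <= h)%N ->
  lam i.+1 * xDR lam h i <= (gamma + 1) * (h%:R - i%:R).
Proof.
move=> il ih; apply: (@scaled_xDR_aux_le _ lam h i) => //; first exact: addr_ge0.
move=> j ij jh; case: (ltnP j lstar) => jl.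
  by rewrite (le_trans (ratio_le_before_peak ij jl (ltnW jh))) // lerDr.
exact: ratio_le_after_peak.
Qed.

End SinglePeaked.

Section GaltonWatson.
Variables (R : realType) (d : nat) (c : nat -> R) (n : R).
Hypotheses (c_ge0 : forall j, 0 <= c j) (c_sum1 : \sum_(0 <= j < d.+1) c j = 1).
Hypothesis n_ge1 : 1 <= n.

Let q_ge0 : 0 <= 1 - n^-1.
Proof. by rewrite subr_ge0 invf_le1 // (lt_le_trans ltr01). Qed.

Let q_le1 : 1 - n^-1 <= 1.
Proof. by rewrite lerBlDr lerDl invr_ge0 (le_trans ler01). Qed.

Lemma tGW_ge0 x : 0 <= x -> 0 <= tGW d c n x.
Proof. by move=> x_ge0; apply: sumr_ge0 => j _; rewrite !mulr_ge0 // exprn_ge0. Qed.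

Lemma tGW_le1 x : 0 <= x -> x <= 1 -> tGW d c n x <= 1.
Proof.
move=> x_ge0 x_le1; rewrite -c_sum1; apply: ler_sum => j _.
rewrite -mulrA -[leRHS]mulr1 ler_wpM2l //.
by rewrite mulr_ile1 ?exprn_ge0 ?exprn_ile1.
Qed.

Lemma tGW_le x y : 0 <= x -> x <= y -> tGW d c n x <= tGW d c n y.
Proof.
move=> x_ge0 xy; apply: ler_sum => j _.
rewrite ler_wpM2r ?exprn_ge0 // ler_wpM2l // lerXn2r // nnegrE.
exact: le_trans xy.
Qed.

Lemma phiGW_ge0_le1 k : 0 <= phiGW d c n k <= 1.
Proof.
elim: k => [|k /andP[phi_ge0 phi_le1]]; first by rewrite /phiGW /= ler01 lexx.
by rewrite /phiGW /= tGW_ge0 ?tGW_le1.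
Qed.

Lemma phiGW_decr k : phiGW d c n k.+1 <= phiGW d c n k.
Proof.
elim: k => [|k IHk]; first by case/andP: (phiGW_ge0_le1 1).
by rewrite /phiGW iterS tGW_le //; case/andP: (phiGW_ge0_le1 k.+1).
Qed.

Lemma lambdaGW_ge0 k : 0 <= lambdaGW d c n k.
Proof. by case: k => [|k]; rewrite /lambdaGW ?subrr // subr_ge0 phiGW_decr. Qed.

Lemma lambdaGW_le1 k : lambdaGW d c n k <= 1.
Proof.
case/andP: (phiGW_ge0_le1 k.-1) => _ ?; case/andP: (phiGW_ge0_le1 k) => ? _.
rewrite /lambdaGW; lra.
Qed.

Lemma sum_lambdaGW m k : (m <= k)%N ->
  \sum_(m.+1 <= l < k.+1) lambdaGW d c n l = phiGW d c n m - phiGW d c n k.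
Proof.
elim: k => [|k IHk]; first by rewrite leqn0 => /eqP->; rewrite big_geq // subrr.
rewrite leq_eqVlt => /orP[/eqP->|]; first by rewrite big_geq // subrr.
by rewrite ltnS => mk; rewrite big_nat_recr //= IHk // /lambdaGW /=; ring.
Qed.

Lemma sum_lambdaGW_le1 m k : (m <= k)%N ->
  \sum_(m.+1 <= l < k.+1) lambdaGW d c n l <= 1.
Proof.
move=> mk; rewrite sum_lambdaGW //.
case/andP: (phiGW_ge0_le1 m) => _ ?; case/andP: (phiGW_ge0_le1 k) => ? _; lra.
Qed.

End GaltonWatson.

(* The hypotheses b > 1 and l* >= 1 only ensure that a peak exists; the bound
   itself uses just the shape of lambda around l*. *)
Theorem proposition5p4 (R : realType) (d : nat) (c : nat -> R) (n : R)
  (lstar : nat) (gamma : R) (h : nat) :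
  (forall j, 0 <= c j) ->
  \sum_(0 <= j < d.+1) c j = 1 ->
  1 <= n ->
  1 < branching d c ->
  (1 <= lstar)%N ->
  (forall i, (2 <= i <= lstar)%N -> lambdaGW d c n i.-1 <= lambdaGW d c n i) ->
  (forall j, (lstar <= j)%N -> lambdaGW d c n j.+1 < lambdaGW d c n j) ->
  1 < gamma ->
  (forall i, (lstar + 2 <= i)%N ->
     (\sum_(i <= j <oo) (lambdaGW d c n j)%:E <= (gamma * lambdaGW d c n i)%:E)%E) ->
  forall i, (i <= lstar)%N -> (i <= h)%N ->
    lambdaGW d c n i.+1 * xDR (lambdaGW d c n) h i <= (gamma + 1) * (h%:R - i%:R).
Proof.
move=> c_ge0 c_sum1 n_ge1 _ _ lam_incr lam_decr gamma_gt1 tail_le i il ih.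
exact: (scaled_xDR_le (lambdaGW_ge0 c_ge0 c_sum1 n_ge1)
  (lambdaGW_le1 c_ge0 c_sum1 n_ge1) (sum_lambdaGW_le1 c_ge0 c_sum1 n_ge1)
  lam_incr lam_decr gamma_gt1 tail_le il ih).
Qed.
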